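(* The map $G$ is regular on $(\mathcal{X},d)$: its set of periodic points (points $x$ with $G^n(x)=x$ for some $n\ge1$) is dense in $\mathcal{X}$.
   Context: Fix an integer $\mathsf{N}\ge 1$ and write $\llbracket a;b\rrbracket=\{a,a+1,\dots,b\}$. Let $f:\mathbb{Z}/4\mathbb{Z}\to\mathbb{Z}/4\mathbb{Z}$, $f(x)=x+1 \pmod 4$, with $f^{-1}(x)=x-1\pmod 4$ and $f^0=\mathrm{id}$. Let $\mathrm{sign}(x)=1$ if $x>0$, $0$ if $x=0$, $-1$ if $x<0$. For $k\in\llbracket -\mathsf{N};\mathsf{N}\rrbracket$ define $f_k:(\mathbb{Z}/4\mathbb{Z})^{\mathsf{N}}\to(\mathbb{Z}/4\mathbb{Z})^{\mathsf{N}}$ by $f_k(C_1,\dots,C_{\mathsf{N}})=(C_1,\dots,C_{|k|-1},f^{\mathrm{sign}(k)}(C_{|k|}),\dots,f^{\mathrm{sign}(k)}(C_{\mathsf{N}}))$ (so $f_0$ is the identity). Folding sequences are $F=(F^j)_{j\in\mathbb{N}}\in\llbracket -\mathsf{N};\mathsf{N}\rrbracket^{\mathbb{N}}$; let $i(F)=F^0$ and let $\sigma$ be the shift, $\sigma((F^j)_{j})=(F^{j+1})_{j}$. A finite sequence $(k_1,\dots,k_n)$ is identified with $(k_1,\dots,k_n,0,0,\dots)$. On $\check{\mathcal{X}}=(\mathbb{Z}/4\mathbb{Z})^{\mathsf{N}}\times\llbracket -\mathsf{N};\mathsf{N}\rrbracket^{\mathbb{N}}$ define $G((C,F))=(f_{i(F)}(C),\sigma(F))$.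 SAW requirement: for $C\in(\mathbb{Z}/4\mathbb{Z})^{\mathsf{N}}$ let $p(C)=(X_0,\dots,X_{\mathsf{N}})\in(\mathbb{Z}^2)^{\mathsf{N}+1}$ with $X_0=(0,0)$ and $X_i=X_{i-1}+v(C_i)$, where $v(0)=(1,0)$, $v(1)=(0,-1)$, $v(2)=(-1,0)$, $v(3)=(0,1)$. $C$ satisfies the SAW requirement iff the points $X_0,\dots,X_{\mathsf{N}}$ are pairwise distinct. Let $\mathfrak{C}_{\mathsf{N}}$ be the set of $C\in(\mathbb{Z}/4\mathbb{Z})^{\mathsf{N}}$ for which there exist $n\ge1$ and $k_1,\dots,k_n\in\llbracket -\mathsf{N};\mathsf{N}\rrbracket$ such that $C$ is the first component of $G^n(((0,\dots,0),(k_1,\dots,k_n)))$ and, for every $i\le n$, the first component of $G^i(((0,\dots,0),(k_1,\dots,k_n)))$ satisfies the SAW requirement. Let $\mathcal{X}=\mathfrak{C}_{\mathsf{N}}\times\llbracket -\mathsf{N};\mathsf{N}\rrbracket^{\mathbb{N}}$ with metric $d((C,F),(\check C,\check F))=d_C(C,\check C)+d_F(F,\check F)$, where $d_C(C,\check C)=\sum_{k=1}^{\mathsf{N}}\delta(C_k,\check C_k)2^{\mathsf{N}-k}$ ($\delta(a,b)=0$ if $a=b$, $1$ otherwise) and $d_F(F,\check F)=\frac{9}{2\mathsf{N}}\sum_{k=0}^{\infty}\frac{|F^k-\check F^k|}{10^{k+1}}$. The paper regards $G$ as a self-map of $\mathcal{X}$. *)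

From Stdlib Require Import Reals.
From Coquelicot Require Import Coquelicot.
From HB Require Import structures.
From mathcomp Require Import all_boot all_order all_algebra.
From mathcomp Require Import Rstruct.
Set Implicit Arguments. Unset Strict Implicit. Unset Printing Implicit Defensive.
Import Order.TTheory GRing.Theory Num.Theory.

(* A conformation C in (Z/4Z)^N: the k-th coordinate C_k (1 <= k <= N)
   is stored at ordinal k-1. *)
Definition conf (N : nat) := {ffun 'I_N -> 'Z_4}.

Definition fseq := nat -> int.
Definition is_fold_seq (N : nat) (F : fseq) : Prop :=
  forall j, (- (Posz N) <= F j)%R /\ (F j <= Posz N)%R.

Definition fpow (s : int) (x : 'Z_4) : 'Z_4 :=
  if (0 < s)%R then (x + 1)%R else if (s < 0)%R then (x - 1)%R else x.

(* f_k : the coordinates C_{|k|}, ..., C_N are moved by f^{sign k}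
   (index i : 'I_N corresponds to coordinate i+1). *)
Definition f_k (N : nat) (k : int) (C : conf N) : conf N :=
  [ffun i : 'I_N => if (`|k|%N <= i.+1)%N then fpow (sgz k) (C i) else C i].

Definition shift (F : fseq) : fseq := fun j => F j.+1.

Definition G (N : nat) (x : conf N * fseq) : conf N * fseq :=
  (f_k (x.2 0%N) x.1, shift x.2).

Definition pad (ks : seq int) : fseq := fun j => nth 0%R ks j.

Definition zero_conf (N : nat) : conf N := [ffun => 0%R].

(* the unit steps v(0)=(1,0), v(1)=(0,-1), v(2)=(-1,0), v(3)=(0,1) *)
Definition vx (c : 'Z_4) : int :=
  match val c with 0%N => 1%R | 2%N => (-1)%R | _ => 0%R end.
Definition vy (c : 'Z_4) : int :=
  match val c with 1%N => (-1)%R | 3%N => 1%R | _ => 0%R end.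

(* X_i = sum_{j=1}^{i} v(C_j) *)
Definition pos (N : nat) (C : conf N) (i : nat) : int * int :=
  ((\sum_(j < N | (j < i)%N) vx (C j))%R, (\sum_(j < N | (j < i)%N) vy (C j))%R).

Definition saw (N : nat) (C : conf N) : Prop :=
  forall i j, (i <= N)%N -> (j <= N)%N -> pos C i = pos C j -> i = j.

Definition frakC (N : nat) (C : conf N) : Prop :=
  exists ks : seq int, (1 <= size ks)%N /\
    (forall k, k \in ks -> (- (Posz N) <= k)%R /\ (k <= Posz N)%R) /\
    C = (iter (size ks) (@G N) (zero_conf N, pad ks)).1 /\
    (forall i, (i <= size ks)%N -> saw (iter i (@G N) (zero_conf N, pad ks)).1).

Definition inX (N : nat) (x : conf N * fseq) : Prop :=
  frakC x.1 /\ is_fold_seq N x.2.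

Definition d_C (N : nat) (C C' : conf N) : R :=
  (\sum_(i < N) (if C i == C' i then 0 else (2 ^ (N - i.+1))%N%:R))%R.
Definition d_F (N : nat) (F F' : fseq) : R :=
  (9 / (2 * INR N) *
   Series (fun k => ((`|F k - F' k|%R)%:~R : R) / 10 ^ (k + 1)))%R.
Definition dist_X (N : nat) (x y : conf N * fseq) : R :=
  (d_C x.1 y.1 + d_F N x.2 y.2)%R.

Definition periodic (N : nat) (x : conf N * fseq) : Prop :=
  exists n, (1 <= n)%N /\ iter n (@G N) x = x.

(* Iterating G translates the conformation by the sum of the fold steps read so
   far and shifts the folding sequence.  If the folding sequence is m-periodic,
   G^m is therefore a translation of (Z/4Z)^N by a fixed vector, and G^(4m) is
   the identity.  Given (C, F) in X, replace F by the m-periodic sequence that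
   repeats its first m terms: the conformation C is untouched, so the new point
   is still in X, and since the two sequences agree up to index m its distance
   to (C, F) is at most 18 / 2^m. *)

From Stdlib Require Import Reals.
From Coquelicot Require Import Coquelicot.
From HB Require Import structures.
From mathcomp Require Import all_boot all_order all_algebra.
From mathcomp Require Import Rstruct ring zify.
From Stdlib Require Import FunctionalExtensionality.
Set Implicit Arguments. Unset Strict Implicit. Unset Printing Implicit Defensive.
Import Order.TTheory GRing.Theory Num.Theory.
Local Open Scope ring_scope.

Lemma fpowE (s : int) (x : 'Z_4) : fpow s x = x + (sgz s)%:~R.
Proof. by rewrite /fpow; case: sgzP; rewrite ?addr0. Qed.

Definition fold_step (N : nat) (k : int) : conf N :=
  [ffun i : 'I_N => if (`|k|%N <= i.+1)%N then (sgz k)%:~R else 0].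

Lemma f_kE N k (C : conf N) : f_k k C = C + fold_step N k.
Proof.
by apply/ffunP => i; rewrite !ffunE fpowE sgz_id; case: ifP; rewrite ?addr0.
Qed.

Lemma iter_G N n (C : conf N) (F : fseq) :
  iter n (@G N) (C, F) =
  (C + \sum_(j < n) fold_step N (F j), fun j => F (n + j)%N).
Proof.
elim: n => [|n IH]; first by rewrite big_ord0 addr0.
rewrite iterS IH /G /= f_kE big_ord_recr /= addn0 addrA; congr pair.
by apply: functional_extensionality => j; rewrite /shift addnS.
Qed.

Lemma ffun_Z4_mulrn4 (I : finType) (D : {ffun I -> 'Z_4}) : D *+ 4 = 0.
Proof.
apply/ffunP => i; rewrite ffunMnE ffunE -mulr_natr.
by apply/val_inj; rewrite /= muln0.
Qed.

Lemma iter_G_periodic N m (C : conf N) (F : fseq) :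
  (forall j, F (m + j)%N = F j) -> iter (m * 4) (@G N) (C, F) = (C, F).
Proof.
move=> F_periodic; set D := \sum_(j < m) fold_step N (F j).
suff iter_mul n : iter (m * n) (@G N) (C, F) = (C + D *+ n, F).
  by rewrite iter_mul ffun_Z4_mulrn4 addr0.
elim: n => [|n IH]; first by rewrite muln0 addr0.
rewrite mulnS iterD IH iter_G mulrSr addrA; congr pair.
exact: functional_extensionality F_periodic.
Qed.

Definition periodize (m : nat) (F : fseq) : fseq := fun j => F (j %% m)%N.

Lemma periodizeD m F j : periodize m F (m + j)%N = periodize m F j.
Proof. by rewrite /periodize modnDl. Qed.

Lemma periodize_small m F j : (j < m)%N -> periodize m F j = F j.
Proof. by move=> ltjm; rewrite /periodize modn_small. Qed.

Lemma periodize_fold_seq N m F : is_fold_seq N F -> is_fold_seq N (periodize m F).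
Proof. by move=> hF j; exact: hF. Qed.

Lemma d_C_refl N (C : conf N) : d_C C C = 0.
Proof. by rewrite /d_C big1 // => i _; rewrite eqxx. Qed.

Lemma fold_seq_normB_le N (F F' : fseq) k :
  is_fold_seq N F -> is_fold_seq N F' -> `|F k - F' k| <= (2 * N)%N%:Z.
Proof.
move=> hF hF'; have [lo hi] := hF k; have [lo' hi'] := hF' k.
rewrite mul2n -addnn PoszD; apply: (le_trans (ler_normB _ _)).
by apply: lerD; rewrite ler_norml ?lo ?hi ?lo' ?hi'.
Qed.

Lemma expn2_le_expn10 m k : (m <= k)%N -> (2 ^ (m + k) <= 10 ^ k.+1)%N.
Proof.
move=> le_mk; apply: (@leq_trans (4 ^ k.+1)); last by rewrite leq_exp2r.
by rewrite -[4%N]/(2 ^ 2)%N -expnM leq_exp2l //; lia.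
Qed.

Lemma d_F_term_le N m (F F' : fseq) k :
  is_fold_seq N F -> is_fold_seq N F' -> (forall k, (k < m)%N -> F k = F' k) ->
  0 <= (`|F k - F' k|%:~R : R) / 10 ^ (k + 1) <= 2 * N%:R / 2 ^+ m * 2^-1 ^+ k.
Proof.
move=> hF hF' eq_prefix.
have -> : (10%:R : R) ^ (k + 1)%N = 10%:R ^+ k.+1 by rewrite addn1.
have rhs_ge0 : (0 : R) <= 2 * N%:R / 2 ^+ m * 2^-1 ^+ k.
  by rewrite !mulr_ge0 ?invr_ge0 ?exprn_ge0 ?invr_ge0.
have [lt_km | le_mk] := ltnP k m.
  by rewrite eq_prefix // subrr normr0 mul0r lexx.
rewrite divr_ge0 ?exprn_ge0 ?ler0z ?normr_ge0 //=.
have dist_le : (`|F k - F' k|%:~R : R) <= 2 * N%:R.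
  have := fold_seq_normB_le k hF hF'; rewrite -(ler_int R) => /le_trans; apply.
  by rewrite -pmulrn natrM.
rewrite exprVn -mulrA -invfM -exprD; apply: ler_pM => //.
  by rewrite invr_ge0 exprn_ge0.
by rewrite lef_pV2 ?posrE ?exprn_gt0 // -!natrX ler_nat expn2_le_expn10.
Qed.

Lemma is_series_geom_half (c : R) : is_series (fun k => c * 2^-1 ^+ k) (c * 2).
Proof.
have half_lt1 : Rlt (Rabs (2^-1)) 1.
  by apply/RltP; change (`|2^-1 : R| < 1); rewrite ger0_norm ?invf_lt1 ?invr_ge0 ?ltr1n.
have := is_series_scal_l c _ _ (is_series_geom _ half_lt1).
rewrite /scal /= /mult /=.
rewrite (_ : Rinv _ = 2); last by change ((1 - 2^-1)^-1 = 2 :> R); field.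
by apply: is_series_ext => k; rewrite RpowE.
Qed.

Lemma d_F_le_eq_prefix N m (F F' : fseq) : (0 < N)%N ->
  is_fold_seq N F -> is_fold_seq N F' -> (forall k, (k < m)%N -> F k = F' k) ->
  d_F N F F' <= 18 / 2 ^+ m.
Proof.
move=> N_gt0 hF hF' eq_prefix.
(* a bare cast [: R] would parse the body in R_scope, with Stdlib's operations *)
set c : R := (2 * N%:R / 2 ^+ m)%R.
have series_le : Series (fun k => (`|F k - F' k|%:~R : R) / 10 ^ (k + 1)) <= c * 2.
  rewrite -(is_series_unique _ _ (is_series_geom_half (c := c))); apply/RleP.
  apply: (Series_le _ _ _ (ex_intro _ _ (is_series_geom_half (c := c)))) => k.
  by have /andP[? ?] := d_F_term_le k hF hF' eq_prefix; split; apply/RleP.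
have N_neq0 : (N%:R : R) != 0 by rewrite pnatr_eq0 -lt0n.
have -> : 18 / 2 ^+ m = 9 / (2 * N%:R) * (c * 2).
  by rewrite /c; field; rewrite N_neq0 expf_neq0 ?pnatr_eq0.
rewrite /d_F INRE; apply: ler_wpM2l series_le.
by rewrite divr_ge0 ?mulr_ge0.
Qed.

Lemma exists_div_pow2_lt (c eps : R) : 0 <= c -> 0 < eps ->
  exists m, (0 < m)%N /\ c / 2 ^+ m < eps.
Proof.
move=> c_ge0 eps_gt0; set m := (Num.bound (c / eps)).+1.
exists m; split => //.
have := archi_boundP (divr_ge0 c_ge0 (ltW eps_gt0)).
rewrite ltr_pdivrMr // ltr_pdivrMr ?exprn_gt0 // => lt_c.
apply: (lt_le_trans lt_c); rewrite mulrC; apply: ler_wpM2l; first exact: ltW.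
by rewrite -natrX ler_nat; apply/ltnW/ltnW/ltn_expl.
Qed.

Theorem mainTheorem3 (N : nat) (hN : (1 <= N)%N) :
  forall (x : conf N * fseq), inX x ->
  forall eps : R, (0 < eps)%R ->
  exists y : conf N * fseq, inX y /\ periodic y /\ (dist_X x y < eps)%R.
Proof.
move=> [C F] [hC hF] eps eps_gt0.
have [m [m_gt0 small]] := exists_div_pow2_lt (ler0n R 18) eps_gt0.
exists (C, periodize m F); split; last split.
- by split; last exact: periodize_fold_seq.
- exists (m * 4)%N; split; first by rewrite muln_gt0 m_gt0.
  exact/iter_G_periodic/periodizeD.
- rewrite /dist_X d_C_refl add0r; apply: le_lt_trans small.
  apply: d_F_le_eq_prefix => //; first exact: periodize_fold_seq.
  by move=> k lt_km; rewrite /= periodize_small.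
Qed.
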